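(* Assume (P). Let $T>0$ and $u\in C([0,T]\times\mathbb{R}^d)$ be such that $\|u(t,\cdot)-u(0,\cdot)\|_\infty\to0$ as $t\to0^+$ and $\sup_{t\in[0,T]}\|u(t,\cdot)\mathbf{1}_{\{|\cdot|\ge r\}}\|_\infty\to0$ as $r\to\infty$. Assume that for all $(t,x)\in(0,T]\times\mathbb{R}^d$, $\partial_tu(t,x)$ exists, $\mathcal{L}^{\kappa,0^+}_xu(t,x)$ is well defined, and $\partial_tu(t,x)=\mathcal{L}^{\kappa,0^+}_xu(t,x)$. If $\sup_{x\in\mathbb{R}^d}u(0,x)\ge0$, then $\sup_{x\in\mathbb{R}^d}u(t,x)\le\sup_{x\in\mathbb{R}^d}u(0,x)$ for every $t\in(0,T]$. Consequently, two such functions $u_1,u_2$ with $u_1(0,\cdot)=u_2(0,\cdot)$ coincide on $[0,T]\times\mathbb{R}^d$.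
   Context: Let $d\in\mathbb{N}$ and let $\nu:[0,\infty)\to[0,\infty]$ be non-increasing with $\int_{\mathbb{R}^d}(1\wedge|x|^2)\nu(|x|)\,dx<\infty$. Let $J:\mathbb{R}^d\to[0,\infty]$ be Borel with $\Lambda^{-1}\nu(|x|)\le J(x)\le\Lambda\nu(|x|)$ for all $x$, for some $\Lambda\ge1$. Let $\kappa:\mathbb{R}^d\times\mathbb{R}^d\to\mathbb{R}$ be Borel with $0<\kappa_0\le\kappa(x,z)\le\kappa_1$ and $|\kappa(x,z)-\kappa(y,z)|\le\kappa_2|x-y|^{\beta}$ for all $x,y,z$, where $\beta\in(0,1)$. For $r>0$ let $h(r)=\int_{\mathbb{R}^d}\big(1\wedge \tfrac{|x|^2}{r^2}\big)\nu(|x|)\,dx$. (WLSC): there are $\alpha_h\in(0,2]$, $C_h\ge1$ with $h(r)\le C_h\lambda^{\alpha_h}h(\lambda r)$ for all $\lambda\le1$, $r\le1$. (WUSC): there are $\beta_h\in(0,2]$, $c_h\in(0,1]$ with $h(r)\ge c_h\lambda^{\beta_h}h(\lambda r)$ for all $\lambda\le1$, $r\le1$. Case (P1): WLSC holds with $1<\alpha_h\le2$. Case (P2): WLSC and WUSC hold with $0<\alpha_h\le\beta_h<1$. Case (P3): WLSC holds, $J(z)=J(-z)$ and $\kappa(x,z)=\kappa(x,-z)$ for all $x,z$. ''(P)'' means one of (P1), (P2), (P3) holds. In the cases (P1), (P2), (P3) respectively, the operator is $\mathcal{L}^{\kappa}f(x)=\int_{\mathbb{R}^d}(f(x+z)-f(x)-\mathbf{1}_{|z|<1}\langle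 z,\nabla f(x)\rangle)\kappa(x,z)J(z)\,dz$, $\mathcal{L}^{\kappa}f(x)=\int_{\mathbb{R}^d}(f(x+z)-f(x))\kappa(x,z)J(z)\,dz$, $\mathcal{L}^{\kappa}f(x)=\tfrac12\int_{\mathbb{R}^d}(f(x+z)+f(x-z)-2f(x))\kappa(x,z)J(z)\,dz$. For $\varepsilon\in[0,1]$, $\mathcal{L}^{\kappa,\varepsilon}$ denotes the same expression with $J(z)$ replaced by $J(z)\mathbf{1}_{|z|>\varepsilon}$; $\mathcal{L}^{\kappa,\varepsilon}f(x)$ is well defined if the integral converges absolutely and, in case (P1), $\nabla f(x)$ exists. The weak operator is $\mathcal{L}^{\kappa,0^+}f(x):=\lim_{\varepsilon\to0^+}\mathcal{L}^{\kappa,\varepsilon}f(x)$, well defined when $\mathcal{L}^{\kappa,\varepsilon}f$ is well defined for all $\varepsilon\in(0,1]$ and the limit exists. A subscript $x$ indicates action in the variable $x$. *)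

From HB Require Import structures.
From mathcomp Require Import all_boot all_order all_algebra.
From mathcomp Require Import all_classical all_reals all_analysis measurable_realfun.
Import Order.TTheory GRing.Theory Num.Theory.
Import numFieldNormedType.Exports.

Set Implicit Arguments.
Unset Strict Implicit.
Unset Printing Implicit Defensive.

Local Open Scope classical_set_scope.
Local Open Scope ring_scope.

(** R^d is represented by row vectors ['rV[R]_d] (with their usual topology);
    [BRd R d] is the same carrier equipped with the Borel sigma-algebra
    (generated by the open sets). *)
Definition BRd (R : realType) (d : nat) := g_sigma_algebraType (@open 'rV[R]_d).

Definition enorm (R : realType) (d : nat) (x : 'rV[R]_d) : R :=
  Num.sqrt (\sum_(i < d) x 0 i ^+ 2).
Definition dotv (R : realType) (d : nat) (x y : 'rV[R]_d) : R :=
  \sum_(i < d) x 0 i * y 0 i.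

(** [mu] is Lebesgue measure on the Borel sets of R^d: it gives every
    half-open box its volume (this determines it uniquely). *)
Definition is_lebesgue (R : realType) (d : nat) (mu : {measure set BRd R d -> \bar R}) :=
  forall a b : 'rV[R]_d, (forall i, a 0 i <= b 0 i) ->
    mu [set x : BRd R d | forall i, a 0 i <= x 0 i < b 0 i] = (\prod_(i < d) (b 0 i - a 0 i))%:E.

Definition hfun (R : realType) (d : nat) (mu : {measure set BRd R d -> \bar R})
  (nu : R -> \bar R) (r : R) : \bar R :=
  (\int[mu]_x ((Order.min 1 (enorm x ^+ 2 / r ^+ 2))%:E * nu (enorm x)))%E.

Definition WLSC (R : realType) (d : nat) (mu : {measure set BRd R d -> \bar R})
  (nu : R -> \bar R) (alpha C : R) :=
  0 < alpha <= 2 /\ 1 <= C /\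
  forall lam r : R, 0 < lam <= 1 -> 0 < r <= 1 ->
    (hfun mu nu r <= (C * lam `^ alpha)%:E * hfun mu nu (lam * r))%E.

Definition WUSC (R : realType) (d : nat) (mu : {measure set BRd R d -> \bar R})
  (nu : R -> \bar R) (beta c : R) :=
  0 < beta <= 2 /\ 0 < c <= 1 /\
  forall lam r : R, 0 < lam <= 1 -> 0 < r <= 1 ->
    ((c * lam `^ beta)%:E * hfun mu nu (lam * r) <= hfun mu nu r)%E.

Inductive Pcase := P1 | P2 | P3.

Definition Pholds (R : realType) (d : nat) (mu : {measure set BRd R d -> \bar R})
  (nu : R -> \bar R) (J : 'rV[R]_d -> \bar R) (kappa : 'rV[R]_d -> 'rV[R]_d -> R)
  (c : Pcase) : Prop :=
  match c with
  | P1 => exists alpha C, WLSC mu nu alpha C /\ 1 < alpha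
  | P2 => exists alpha C beta c', WLSC mu nu alpha C /\ WUSC mu nu beta c' /\
                                  alpha <= beta /\ beta < 1
  | P3 => (exists alpha C, WLSC mu nu alpha C) /\ (forall z, J z = J (- z)) /\
          (forall x z, kappa x z = kappa x (- z))
  end.

Definition grad (R : realType) (d : nat) (f : 'rV[R]_d -> R) (x : 'rV[R]_d) : 'rV[R]_d :=
  \row_(i < d) ('D_(delta_mx 0 i) f x).

Definition Lkern (R : realType) (d : nat) (c : Pcase) (f : 'rV[R]_d -> R)
  (x z : 'rV[R]_d) : R :=
  match c with
  | P1 => f (x + z) - f x - (if enorm z < 1 then dotv z (grad f x) else 0)
  | P2 => f (x + z) - f x
  | P3 => f (x + z) + f (x - z) - 2 * f x
  end.

Definition Lintegrand (R : realType) (d : nat) (J : 'rV[R]_d -> \bar R)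
  (kappa : 'rV[R]_d -> 'rV[R]_d -> R) (c : Pcase) (f : 'rV[R]_d -> R)
  (x : 'rV[R]_d) (eps : R) (z : 'rV[R]_d) : \bar R :=
  ((Lkern c f x z * kappa x z)%:E * (J z * (if eps < enorm z then 1 else 0)%:E))%E.

Definition Leps_wd (R : realType) (d : nat) (mu : {measure set BRd R d -> \bar R})
  (J : 'rV[R]_d -> \bar R) (kappa : 'rV[R]_d -> 'rV[R]_d -> R) (c : Pcase)
  (f : 'rV[R]_d -> R) (x : 'rV[R]_d) (eps : R) : Prop :=
  (c = P1 -> forall i : 'I_d, derivable f x (delta_mx 0 i)) /\
  mu.-integrable [set: BRd R d] (Lintegrand J kappa c f x eps).

Definition Leps (R : realType) (d : nat) (mu : {measure set BRd R d -> \bar R})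
  (J : 'rV[R]_d -> \bar R) (kappa : 'rV[R]_d -> 'rV[R]_d -> R) (c : Pcase)
  (f : 'rV[R]_d -> R) (x : 'rV[R]_d) (eps : R) : R :=
  (if c is P3 then 2^-1 else 1) *
  fine (\int[mu]_z Lintegrand J kappa c f x eps z)%E.

Definition Lweak_is (R : realType) (d : nat) (mu : {measure set BRd R d -> \bar R})
  (J : 'rV[R]_d -> \bar R) (kappa : 'rV[R]_d -> 'rV[R]_d -> R) (c : Pcase)
  (f : 'rV[R]_d -> R) (x : 'rV[R]_d) (l : R) : Prop :=
  (forall eps, 0 < eps <= 1 -> Leps_wd mu J kappa c f x eps) /\
  Leps mu J kappa c f x eps @[eps --> 0^'+] --> l.

(** partial_t u(t,x) = l, for u defined on [0,T] x R^d (one-sided at t = T) *)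
Definition dt_is (R : realType) (d : nat) (T : R) (u : R -> 'rV[R]_d -> R)
  (t : R) (x : 'rV[R]_d) (l : R) : Prop :=
  (fun s => (u s x - u t x) / (s - t)) @ within [set s | 0 <= s <= T] (t^') --> l.

Definition is_solution (R : realType) (d : nat) (mu : {measure set BRd R d -> \bar R})
  (J : 'rV[R]_d -> \bar R) (kappa : 'rV[R]_d -> 'rV[R]_d -> R) (c : Pcase)
  (T : R) (u : R -> 'rV[R]_d -> R) : Prop :=
  {within [set p : R * 'rV[R]_d | 0 <= p.1 <= T], continuous (fun p => u p.1 p.2)} /\
  (forall e : R, 0 < e -> exists delta : R, 0 < delta /\
     forall t x, 0 < t <= T -> t < delta -> `|u t x - u 0 x| <= e) /\
  (forall e : R, 0 < e -> exists r0 : R, forall r, r0 <= r ->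
     forall t x, 0 <= t <= T -> r <= enorm x -> `|u t x| <= e) /\
  (forall t x, 0 < t <= T -> exists l : R,
     dt_is T u t x l /\ Lweak_is mu J kappa c (u t) x l).

From HB Require Import structures.
From mathcomp Require Import all_boot all_order all_algebra.
From mathcomp Require Import all_classical all_reals all_analysis measurable_realfun.
From mathcomp Require Import ring lra.
Import Order.TTheory GRing.Theory Num.Theory.
Import numFieldNormedType.Exports.

Set Implicit Arguments.
Unset Strict Implicit.
Unset Printing Implicit Defensive.

Local Open Scope classical_set_scope.
Local Open Scope ring_scope.

(* Comparison by penalization. If [u1 - u2] exceeded [M >= 0] at some time [t1], then
   [w = u1 - u2 - eps t] with small [eps > 0] would attain its maximum over
   [0, t1] x R^d (continuity plus decay at infinity), at a positive time since
   [w <= M] at time [0]. At that point [partial_t (u1 - u2) >= eps > 0], while the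
   integrand of the operator applied to [u1] is pointwise below that applied to [u2]
   (in case (P1) the gradients agree at the maximum), so the weak operators compare
   the other way: a contradiction. Comparison with the zero solution gives the
   maximum principle, comparison in both directions gives uniqueness. *)

Lemma derive_at_max_eq0 (R : realType) (V : normedModType R) (F : V -> R) (a v : V) :
  derivable F a v -> (forall y, F y <= F a) -> 'D_v F a = 0.
Proof.
move=> dF Fmax.
set q := fun h : R => h^-1 *: ((F \o shift a) (h *: v) - F a).
have qD : q @ 0^' --> 'D_v F a := dF.
have F_shift_le h : (F \o shift a) (h *: v) - F a <= 0 by rewrite subr_le0 Fmax.
apply/eqP; rewrite eq_le; apply/andP; split.
- have qDr : q @ 0^'+ --> 'D_v F a.
    by apply: cvg_trans qD; apply: cvg_app; apply: within_subset => h /gt_eqF ->.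
  apply: (cvgr_to_le qDr); near=> h; apply: mulr_ge0_le0 => //.
  by rewrite invr_ge0 ltW //; near: h; exact: nbhs_right_gt.
- have qDl : q @ 0^'- --> 'D_v F a.
    by apply: cvg_trans qD; apply: cvg_app; apply: within_subset => h /lt_eqF ->.
  apply: (cvgr_to_ge qDl); near=> h; apply: mulr_le0 => //.
  by rewrite invr_le0 ltW //; near: h; exact: nbhs_left_lt.
Unshelve. all: by end_near.
Qed.

Lemma derive_eq_at_max_sub (R : realType) (V : normedModType R) (f g : V -> R) (a v : V) :
  derivable f a v -> derivable g a v ->
  (forall y, f y - g y <= f a - g a) -> 'D_v f a = 'D_v g a.
Proof.
move=> df dg fg_max; apply/eqP; rewrite -subr_eq0 -deriveB //.
by apply/eqP/derive_at_max_eq0; [exact: derivableB | exact: fg_max].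
Qed.

Lemma Lkern_le_at_max_sub (R : realType) (d : nat) (c : Pcase)
  (f g : 'rV[R]_d -> R) (x : 'rV[R]_d) :
  (forall y, f y - g y <= f x - g x) ->
  (c = P1 -> forall i : 'I_d, derivable f x (delta_mx 0 i)) ->
  (c = P1 -> forall i : 'I_d, derivable g x (delta_mx 0 i)) ->
  forall z, Lkern c f x z <= Lkern c g x z.
Proof.
move=> fg_max df dg z; have := fg_max (x + z); have := fg_max (x - z).
case: c df dg => df dg /=; try lra.
have -> : grad f x = grad g x.
  by apply/rowP => i; rewrite !mxE; apply: derive_eq_at_max_sub; [exact: df|exact: dg|].
lra.
Qed.

Lemma le_derivative_at_left_max (R : realType) (f : R -> R) (t T l eps : R) :
  0 < t <= T ->
  (fun s => (f s - f t) / (s - t)) @ within [set s | 0 <= s <= T] (t^') --> l ->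
  (forall s, 0 <= s < t -> f s - eps * s <= f t - eps * t) -> eps <= l.
Proof.
move=> /andP[t0 tT] df left_max.
have dfl : (fun s => (f s - f t) / (s - t)) @ t^'- --> l.
  apply: cvg_trans df; apply: cvg_app => P /=.
  rewrite !nbhs_filterE => HP.
  have {}HP : \forall s \near t, s != t -> 0 <= s <= T -> P s := HP.
  move: HP (lt_nbhsr t0); apply: filterS2 => s HP s0 st.
  by apply: HP; rewrite ?lt_eqF // ltW //= (le_trans (ltW st)).
apply: (cvgr_to_ge dfl); near=> s.
have st : s < t by near: s; exact: nbhs_left_lt.
have s0 : 0 < s by near: s; move: (lt_nbhsr t0); apply: filterS => s s0 _.
rewrite ler_ndivlMr ?subr_lt0 //.
by have := left_max s; rewrite (ltW s0) st => /(_ isT); lra.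
Unshelve. all: by end_near.
Qed.

Lemma coord_le_enorm (R : realType) (d : nat) (x : 'rV[R]_d) (i : 'I_d) :
  `|x ord0 i| <= enorm x.
Proof.
have -> : ord0 = 0 :> 'I_1 by apply: val_inj.
rewrite /enorm -sqrtr_sqr; apply: ler_wsqrtr.
by rewrite (bigD1 i) //= lerDl; apply: sumr_ge0 => j _; exact: sqr_ge0.
Qed.

Definition strip (R : realType) (d : nat) (t : R) : set (R * 'rV[R]_d) :=
  [set p | 0 <= p.1 <= t].

(* Outside a box [0, t] x [-r, r]^d, [w] stays below half its value at [p0], so
   its maximum over the compact box is a maximum over the whole strip. *)
Lemma strip_argmax (R : realType) (d : nat) (t : R) (w : R * 'rV[R]_d -> R)
    (p0 : R * 'rV[R]_d) :
  {within strip t, continuous w} ->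
  (forall e, 0 < e -> exists r, forall s y, 0 <= s <= t -> r <= enorm y -> w (s, y) <= e) ->
  strip t p0 -> 0 < w p0 ->
  exists2 p, strip t p & forall q, strip t q -> w q <= w p.
Proof.
move=> cw w_small Sp0 wp0.
have [r0 wr0] := w_small _ (divr_gt0 wp0 (ltr0Sn R 1)).
set r := Num.max r0 (enorm p0.2).
have r0r : r0 <= r by rewrite le_max lexx.
set K := `[0, t]%classic `*` [set y : 'rV[R]_d | forall i, `[- r, r]%classic (y ord0 i)].
have inK q : strip t q -> enorm q.2 <= r -> K q.
  move=> Sq qr; split => [|i]; first by rewrite /= in_itv.
  by rewrite /= in_itv /= -ler_norml (le_trans (coord_le_enorm _ _)).
have KS : K `<=` strip t by move=> [s y] [/=]; rewrite in_itv.
have cK : compact K.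
  apply: compact_setX; first exact: segment_compact.
  by apply: (@rV_compact _ _ (fun=> `[- r, r]%classic)) => i; exact: segment_compact.
have Kp0 : K p0 by apply: inK; rewrite // le_max lexx orbT.
have [p /set_mem Kp pmax] :=
  compact_EVT_max (ex_intro _ p0 Kp0) cK (continuous_subspaceW KS cw).
exists p => [|[s y] Sq]; first exact: KS.
have [yr|ry] := leP (enorm y) r; first by apply/pmax/mem_set/inK.
have := wr0 s y Sq (le_trans r0r (ltW ry)).
have := pmax _ (mem_set Kp0); lra.
Qed.

Section ComparisonPrinciple.
Variables (R : realType) (d : nat) (mu : {measure set BRd R d -> \bar R}).
Variables (J : 'rV[R]_d -> \bar R) (kappa : 'rV[R]_d -> 'rV[R]_d -> R) (c : Pcase).
Hypothesis J_ge0 : forall z, (0 <= J z)%E.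
Hypothesis kappa_gt0 : forall x z, 0 < kappa x z.

Lemma Leps_le (f g : 'rV[R]_d -> R) (x : 'rV[R]_d) (eps : R) :
  Leps_wd mu J kappa c f x eps -> Leps_wd mu J kappa c g x eps ->
  (forall z, Lkern c f x z <= Lkern c g x z) ->
  Leps mu J kappa c f x eps <= Leps mu J kappa c g x eps.
Proof.
move=> [_ If] [_ Ig] fg_le; apply: ler_wpM2l; first by case: (c).
apply: fine_le; [exact: integrable_fin_num If | exact: integrable_fin_num Ig|].
apply: le_integral => // z _; apply: lee_wpmul2r.
  by apply: mule_ge0 => //; rewrite lee_fin; case: ifP.
by rewrite lee_fin ler_wpM2r // ltW.
Qed.

Lemma Lweak_le (f g : 'rV[R]_d -> R) (x : 'rV[R]_d) (l1 l2 : R) :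
  Lweak_is mu J kappa c f x l1 -> Lweak_is mu J kappa c g x l2 ->
  (forall z, Lkern c f x z <= Lkern c g x z) -> l1 <= l2.
Proof.
move=> [wd1 L1] [wd2 L2] fg_le; rewrite -subr_ge0.
apply: (cvgr_to_ge (cvgB L2 L1)); near=> e.
have e01 : 0 < e <= 1.
  apply/andP; split; first by near: e; exact: nbhs_right_gt.
  by near: e; apply: nbhs_right_le; exact: ltr01.
by rewrite subr_ge0; apply: Leps_le; [exact: wd1 | exact: wd2 |].
Unshelve. all: by end_near.
Qed.

(* At a maximum point of [u1 - u2 - eps t] with positive time, the time derivative
   of [u1 - u2] is at least [eps], while the operator, monotone in the kernel,
   gives at most [0]. *)
Lemma penalized_max_le0 (T : R) (u1 u2 : R -> 'rV[R]_d -> R) (eps ts : R) (xs : 'rV[R]_d) :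
  is_solution mu J kappa c T u1 -> is_solution mu J kappa c T u2 -> 0 < ts <= T ->
  (forall s y, 0 <= s <= ts ->
     u1 s y - u2 s y - eps * s <= u1 ts xs - u2 ts xs - eps * ts) ->
  eps <= 0.
Proof.
move=> [_ [_ [_ eq1]]] [_ [_ [_ eq2]]] tsT ws_max.
have [l1 [dt1 Lw1]] := eq1 ts xs tsT.
have [l2 [dt2 Lw2]] := eq2 ts xs tsT.
have /andP[ts0 _] := tsT.
have time_le : eps <= l1 - l2.
  apply: (@le_derivative_at_left_max R (fun s => u1 s xs - u2 s xs) ts T) => //
    [|s /andP[s0 sts]].
  - have -> : (fun s => (u1 s xs - u2 s xs - (u1 ts xs - u2 ts xs)) / (s - ts)) =
       (fun s => (u1 s xs - u1 ts xs) / (s - ts) - (u2 s xs - u2 ts xs) / (s - ts)).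
      by apply: funext => s; rewrite -mulrBl; congr (_ * _); lra.
    exact: cvgB dt1 dt2.
  - by have := ws_max s xs; rewrite s0 ltW //= => /(_ isT); lra.
have space_le : l1 <= l2.
  have w1 : 0 < (1 : R) <= 1 by rewrite ltr01 lexx.
  apply: (Lweak_le Lw1 Lw2); apply: Lkern_le_at_max_sub.
  - by move=> y; have := ws_max ts y; rewrite (ltW ts0) lexx => /(_ isT); lra.
  - exact: (Lw1.1 1 w1).1.
  - exact: (Lw2.1 1 w1).1.
lra.
Qed.

Lemma penalized_continuous (T t eps : R) (u1 u2 : R -> 'rV[R]_d -> R) :
  is_solution mu J kappa c T u1 -> is_solution mu J kappa c T u2 -> t <= T ->
  {within strip t, continuous (fun p : R * 'rV[R]_d => u1 p.1 p.2 - u2 p.1 p.2 - eps * p.1)}.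
Proof.
move=> [C1 _] [C2 _] tT.
have sub : strip t `<=` (strip T : set (R * 'rV[R]_d)).
  by move=> p; rewrite /strip /= => /andP[p0 pt]; rewrite p0 (le_trans pt).
change (continuous ((from_subspace (strip t) (fun p : R * 'rV[R]_d => u1 p.1 p.2)
  - from_subspace (strip t) (fun p : R * 'rV[R]_d => u2 p.1 p.2))
  - from_subspace (strip t) (fun p : R * 'rV[R]_d => eps * p.1))).
move=> p; apply: continuousB; first apply: continuousB.
- exact: (continuous_subspaceW sub C1).
- exact: (continuous_subspaceW sub C2).
- by move: p; apply: continuous_subspaceT => p; apply: cvgM; [exact: cvg_cst | exact: cvg_fst].
Qed.

Lemma penalized_small_at_infinity (T t eps : R) (u1 u2 : R -> 'rV[R]_d -> R) :
  is_solution mu J kappa c T u1 -> is_solution mu J kappa c T u2 -> t <= T -> 0 <= eps ->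
  forall e, 0 < e -> exists r, forall s y, 0 <= s <= t -> r <= enorm y ->
    u1 s y - u2 s y - eps * s <= e.
Proof.
move=> [_ [_ [D1 _]]] [_ [_ [D2 _]]] tT eps0 e e0.
have [r1 small1] := D1 _ (divr_gt0 e0 (ltr0Sn R 1)).
have [r2 small2] := D2 _ (divr_gt0 e0 (ltr0Sn R 1)).
exists (Num.max r1 r2) => s y /andP[s0 st]; rewrite ge_max => /andP[r1y r2y].
have sT : 0 <= s <= T by rewrite s0 (le_trans st).
have := small1 _ r1y s y sT (lexx _); have := small2 _ r2y s y sT (lexx _).
rewrite !ler_norml => /andP[? ?] /andP[? ?].
have : 0 <= eps * s by rewrite mulr_ge0.
lra.
Qed.

Lemma solution_sub_le (T : R) (u1 u2 : R -> 'rV[R]_d -> R) (M : R) :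
  is_solution mu J kappa c T u1 -> is_solution mu J kappa c T u2 ->
  0 <= M -> (forall x, u1 0 x - u2 0 x <= M) ->
  forall t x, 0 < t <= T -> u1 t x - u2 t x <= M.
Proof.
move=> S1 S2 M0 init_le t1 x1 /andP[t10 t1T]; rewrite leNgt; apply/negP => M_lt.
set a := u1 t1 x1 - u2 t1 x1 - M.
have a_gt0 : 0 < a by rewrite /a subr_gt0.
set eps := a / (2 * t1).
have eps_gt0 : 0 < eps by rewrite divr_gt0 ?mulr_gt0.
set w := fun p : R * 'rV[R]_d => u1 p.1 p.2 - u2 p.1 p.2 - eps * p.1.
have w_t1 : w (t1, x1) = M + a / 2 by rewrite /w /= /eps /a; field; rewrite gt_eqF.
have [[ts xs] Sts ws_max] :
    exists2 p, strip t1 p & forall q, strip t1 q -> w q <= w p.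
  apply: (strip_argmax (p0 := (t1, x1))).
  - exact: (penalized_continuous S1 S2 t1T).
  - exact: (penalized_small_at_infinity S1 S2 t1T (ltW eps_gt0)).
  - by rewrite /strip /= lexx ltW.
  - by rewrite w_t1; lra.
have /andP[ts0 tst1] : 0 <= ts <= t1 := Sts.
have ws_ge : M + a / 2 <= w (ts, xs) by rewrite -w_t1; apply: ws_max; rewrite /strip /= lexx ltW.
have ts_gt0 : 0 < ts.
  rewrite lt_neqAle ts0 andbT; apply/eqP => ts_eq; move: ws_ge.
  by rewrite /w /= -ts_eq mulr0 subr0; have := init_le xs; lra.
have : eps <= 0.
  apply: (penalized_max_le0 S1 S2 (ts := ts) (xs := xs)); first by rewrite ts_gt0 (le_trans tst1).
  move=> s y /andP[s0 sts]; apply: (ws_max (s, y)).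
  by rewrite /strip /= s0 (le_trans sts).
lra.
Qed.

Lemma is_solution0 (T : R) : is_solution mu J kappa c T (fun _ _ => 0).
Proof.
have Lkern0 (x z : 'rV[R]_d) : Lkern c (fun=> 0) x z = 0.
  have dot0 : dotv z (grad (fun=> 0 : R) x) = 0.
    by rewrite /dotv big1 // => i _; rewrite !mxE derive_cst mulr0.
  by case: (c) => /=; rewrite ?dot0 ?if_same; lra.
have Lintegrand0 (x : 'rV[R]_d) (eps : R) : Lintegrand J kappa c (fun=> 0) x eps = cst 0%E.
  by apply: funext => z; rewrite /Lintegrand Lkern0 mul0r mul0e.
have Leps0 (x : 'rV[R]_d) (eps : R) : Leps mu J kappa c (fun=> 0) x eps = 0.
  by rewrite /Leps Lintegrand0 integral0 mulr0.
split; [|split; [|split]].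
- by apply: continuous_subspaceT => p; exact: cvg_cst.
- by move=> e e0; exists 1; split => // t x _ _; rewrite subrr normr0 ltW.
- by move=> e e0; exists 0 => r _ t x _ _; rewrite normr0 ltW.
- move=> t x _; exists 0; split; [|split].
  + by rewrite /dt_is; under eq_fun do rewrite subrr mul0r; exact: cvg_cst.
  + move=> eps _; split; first by move=> _ i; exact: derivable_cst.
    by rewrite Lintegrand0; exact: integrable0.
  + by under eq_fun do rewrite Leps0; exact: cvg_cst.
Qed.

Lemma solution_le (T : R) (u : R -> 'rV[R]_d -> R) (M : R) :
  is_solution mu J kappa c T u -> 0 <= M -> (forall x, u 0 x <= M) ->
  forall t x, 0 < t <= T -> u t x <= M.
Proof.
move=> Su M0 init_le t x tT; rewrite -[u t x]subr0.
apply: (solution_sub_le Su (is_solution0 T)) => // y.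
by rewrite subr0.
Qed.

Lemma solution_unique (T : R) (u1 u2 : R -> 'rV[R]_d -> R) :
  is_solution mu J kappa c T u1 -> is_solution mu J kappa c T u2 ->
  (forall x, u1 0 x = u2 0 x) -> forall t x, 0 <= t <= T -> u1 t x = u2 t x.
Proof.
move=> S1 S2 init_eq t x /andP[t0 tT].
have [t_gt0|t_le0] := ltrP 0 t; last by rewrite (_ : t = 0) ?init_eq //; apply/le_anti; rewrite t_le0.
have tT' : 0 < t <= T by rewrite t_gt0.
have init12 y : u1 0 y - u2 0 y <= 0 by rewrite init_eq subrr.
have init21 y : u2 0 y - u1 0 y <= 0 by rewrite init_eq subrr.
have := solution_sub_le S1 S2 (lexx 0) init12 x tT'.
have := solution_sub_le S2 S1 (lexx 0) init21 x tT'.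
lra.
Qed.

End ComparisonPrinciple.

Theorem theorem4p1 (R : realType) (d : nat) (mu : {measure set BRd R d -> \bar R})
  (nu : R -> \bar R) (J : 'rV[R]_d -> \bar R) (Lam : R)
  (kappa : 'rV[R]_d -> 'rV[R]_d -> R) (kappa0 kappa1 kappa2 beta : R)
  (c : Pcase) (T : R) :
  (0 < d)%N ->
  is_lebesgue mu ->
  (forall r, 0 <= r -> (0 <= nu r)%E) ->
  (forall r s, 0 <= r -> r <= s -> (nu s <= nu r)%E) ->
  (\int[mu]_x ((Order.min 1 (enorm x ^+ 2))%:E * nu (enorm x)) < +oo)%E ->
  measurable_fun [set: BRd R d] J ->
  1 <= Lam ->
  (forall x, ((Lam^-1)%:E * nu (enorm x) <= J x)%E /\ (J x <= Lam%:E * nu (enorm x))%E) ->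
  measurable_fun [set: (BRd R d * BRd R d)%type] (fun p : BRd R d * BRd R d => kappa p.1 p.2) ->
  0 < kappa0 ->
  (forall x z, kappa0 <= kappa x z <= kappa1) ->
  0 < beta < 1 ->
  (forall x y z, `|kappa x z - kappa y z| <= kappa2 * enorm (x - y) `^ beta) ->
  Pholds mu nu J kappa c ->
  0 < T ->
  (forall u : R -> 'rV[R]_d -> R, is_solution mu J kappa c T u ->
     (0 <= ereal_sup (range (fun x => (u 0 x)%:E)))%E ->
     forall t, 0 < t <= T ->
       (ereal_sup (range (fun x => (u t x)%:E)) <= ereal_sup (range (fun x => (u 0 x)%:E)))%E)
  /\
  (forall u1 u2 : R -> 'rV[R]_d -> R,
     is_solution mu J kappa c T u1 -> is_solution mu J kappa c T u2 ->
     (forall x, u1 0 x = u2 0 x) ->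
     forall t x, 0 <= t <= T -> u1 t x = u2 t x).
Proof.
(* Only [J >= 0] and [kappa > 0] enter the comparison argument. *)
move=> _ _ nu_ge0 _ _ _ Lam_ge1 J_bounds _ kappa0_gt0 kappa_bounds _ _ _ _.
have J_ge0 z : (0 <= J z)%E.
  apply: le_trans (J_bounds z).1; apply: mule_ge0; last exact/nu_ge0/sqrtr_ge0.
  by rewrite lee_fin invr_ge0 (le_trans ler01).
have kappa_gt0 x z : 0 < kappa x z.
  by apply: lt_le_trans kappa0_gt0 _; have /andP[] := kappa_bounds x z.
split; last exact: solution_unique.
move=> u Su; set S := ereal_sup _ => S_ge0 t tT.
have u0_le x : ((u 0 x)%:E <= S)%E by apply: ereal_sup_ubound; exists x.
move: S_ge0 u0_le; case: S => [M | | //] M_ge0 u0_le; last exact: leey.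
apply: ge_ereal_sup => _ [x _ <-]; rewrite lee_fin.
by apply: (solution_le J_ge0 kappa_gt0 Su) => // y; rewrite -lee_fin.
Qed.
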